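(* Let $n,k,t$ be positive integers with $k<n$ and $t\ge 4$, let $q$ be a prime power and $\mathcal{D}$ the Desarguesian $(t-1)$-spread of $\mathrm{PG}(nt-1,q)$. Let $\nu$ be a $\mathcal{D}_{n-k-1}$-subspace of $\mathrm{PG}(nt-1,q)$ and let $\Pi$ be an $(nt-kt+1)$-dimensional subspace containing $\nu$ such that the subspace of $\mathrm{PG}(n-1,q^t)$ spanned by the points of $\mathcal{B}(\Pi)$ has dimension $n-k+1$. Let $\Omega$ be an $(nt-kt-2)$-dimensional subspace of $\Pi$ meeting $\nu$ in an $(nt-kt-4)$-dimensional subspace, let $\Gamma$ be a plane of $\Pi$ skew from $\Omega$, and let $\bar{B}$ be a minimal blocking set (with respect to lines) of $\Gamma$ which is disjoint from $\nu$. Let $K$ be the cone with vertex $\Omega$ and base $\bar{B}$. Then $\mathcal{B}(K)$ is a minimal blocking set with respect to $(k-1)$-dimensional subspaces of $\mathrm{PG}(n-1,q^t)$.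
   Context: Field reduction: each point of $\mathrm{PG}(n-1,q^t)$ corresponds to a $(t-1)$-dimensional subspace of $\mathrm{PG}(nt-1,q)$ (the $1$-dimensional $\mathbb{F}_{q^t}$-subspace viewed over $\mathbb{F}_q$); these form the Desarguesian $(t-1)$-spread $\mathcal{D}$. A $\mathcal{D}_{r-1}$-subspace is an $(rt-1)$-dimensional subspace of $\mathrm{PG}(nt-1,q)$ spanned by elements of $\mathcal{D}$ (the field reduction of an $(r-1)$-dimensional subspace of $\mathrm{PG}(n-1,q^t)$). For $U\subseteq\mathrm{PG}(nt-1,q)$, $\mathcal{B}(U)$ is the set of elements of $\mathcal{D}$ meeting $U$, identified with points of $\mathrm{PG}(n-1,q^t)$. The cone with vertex $\Omega$ and base $\bar{B}$ is $\bigcup_{P\in\bar B}\langle P,\Omega\rangle$. A blocking set with respect to $j$-spaces is a point set meeting every $j$-dimensional subspace; minimal means no proper subset has this property. *)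

(* Projective spaces are modelled by vector subspaces of
   V = L^n ('rV[L]_n) where L is a finite field of order q^t; F_q is the
   subfield {c | c^q = c}. *)
From HB Require Import structures.
From mathcomp Require Import all_boot all_order all_algebra.
Set Implicit Arguments. Unset Strict Implicit. Unset Printing Implicit Defensive.
Import GRing.Theory.
Local Open Scope ring_scope.

Section FieldReduction.
Variables (L : finFieldType) (q n : nat).
Local Notation V := 'rV[L]_n.

Definition Fsub (S : {set V}) : bool :=
  [&& (0 : V) \in S,
      [forall x in S, forall y in S, x + y \in S] &
      [forall c : L, forall x in S, (c ^+ q == c) ==> (c *: x \in S)]].

(* S is an L-subspace of V (a subspace of PG(n-1,q^t)) *)
Definition Lsub (S : {set V}) : bool :=
  [&& (0 : V) \in S,
      [forall x in S, forall y in S, x + y \in S] &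
      [forall c : L, forall x in S, c *: x \in S]].

Definition Fspan (X : {set V}) : {set V} :=
  \bigcap_(S : {set V} | Fsub S && (X \subset S)) S.
Definition Lspan (X : {set V}) : {set V} :=
  \bigcap_(S : {set V} | Lsub S && (X \subset S)) S.

(* projective dimension d of an F_q-subspace: vector dimension d+1 *)
Definition Fpdim (S : {set V}) (d : nat) : Prop := Fsub S /\ #|S| = (q ^ d.+1)%N.
Definition Lpdim (S : {set V}) (d : nat) : Prop := Lsub S /\ #|S| = (#|L| ^ d.+1)%N.

(* points of PG(nt-1,q) and of PG(n-1,q^t) (= elements of the Desarguesian
   spread D) *)
Definition Fpoint (P : {set V}) : bool := Fsub P && (#|P| == q).
Definition Lpoint (X : {set V}) : bool := Lsub X && (#|X| == #|L|).

(* a D_{r-1}-subspace: field reduction of an (r-1)-dim subspace of PG(n-1,q^t) *)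
Definition Dsubspace (S : {set V}) (r : nat) : Prop :=
  Lsub S /\ #|S| = (#|L| ^ r)%N.

Definition Fpoints_of (S : {set V}) : {set {set V}} :=
  [set P | Fpoint P & P \subset S].

Definition Bset (U : {set {set V}}) : {set {set V}} :=
  [set X | Lpoint X &
     [exists P in U, exists v : V, [&& v != 0, v \in P & v \in X]]].

Definition cone (Om : {set V}) (Bb : {set {set V}}) : {set {set V}} :=
  [set P | Fpoint P & [exists b in Bb, P \subset Fspan (b :|: Om)]].

Definition blocking (isSub : {set V} -> Prop) (B : {set {set V}}) : Prop :=
  forall W, isSub W -> exists2 X, X \in B & X \subset W.

Definition minimal_blocking (isSub : {set V} -> Prop) (B : {set {set V}}) : Prop :=
  blocking isSub B /\ forall B' : {set {set V}}, B' \proper B -> ~ blocking isSub B'.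

End FieldReduction.

(** Blocking: a (k-1)-space W of PG(n-1,q^t) has F_q-dimension kt, so it meets
    the (nt-kt+1)-space Pi in at least an F_q-line l.  Either l meets the vertex
    Omega, or <l, Omega> is a hyperplane of Pi; that hyperplane meets the plane
    Gamma in a line, which contains a point b of the blocking set, and the vector
    of b splits as s + o with s in l, o in Omega, so s lies on the cone.

    Minimality: for every point u of the cone we build a (k-1)-space of
    PG(n-1,q^t) whose only point in B(K) is the spread element through u.  It
    suffices to find an L-line N inside the span M of B(Pi) with N meeting the
    cone only in <u>_L, and to extend N to dimension k avoiding the rest of M.
    If u lies in nu, take N = <u, w>_L for a w in M whose L-point misses Pi.
    Otherwise u lies on <Omega, b> for a point b of the base; a line l of Gamma
    tangent to the base at b gives the hyperplane H = <Omega, l> of Pi, whose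
    cone vectors all lie in <Omega, b>, and N is the L-span of an F_q-line
    <u, w> of H with w outside <Omega, b> and <nu, u>; comparing sizes in M
    shows that N meets Pi only in <u, w>. *)

From mathcomp Require Import all_boot all_order all_fingroup all_algebra.
From mathcomp Require Import cyclic finfield ring zify.
From Stdlib Require Import Classical.
Set Implicit Arguments. Unset Strict Implicit. Unset Printing Implicit Defensive.
Import GRing.Theory.
Local Open Scope ring_scope.

Lemma card_expr_fixed_le (L : finFieldType) m :
  (1 < m)%N -> (#|[set c : L | c ^+ m == c]| <= m)%N.
Proof.
move=> m_gt1; have XmX_neq0 : ('X^m - 'X : {poly L}) != 0.
  by rewrite -size_poly_eq0 size_polyDl ?size_polyXn ?size_polyN ?size_polyX ?ltnS.
have := max_poly_roots XmX_neq0 (rs := enum [set c : L | c ^+ m == c]).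
rewrite size_polyDl ?size_polyXn ?size_polyN ?size_polyX ?ltnS // cardE.
apply; last exact: enum_uniq.
by apply/allP=> x; rewrite mem_enum inE /root !hornerE => /eqP->; rewrite subrr.
Qed.

Section FrobeniusFixedPoints.
Variables (L : finFieldType) (p e t : nat).
Hypotheses (p_pr : prime p) (t_gt0 : (0 < t)%N) (cardL : #|L| = ((p ^ e.+1) ^ t)%N).
Local Notation q := (p ^ e.+1)%N.

Lemma prime_power_gt1 : (1 < q)%N.
Proof. by rewrite -{1}(expn0 p) ltn_exp2l // prime_gt1. Qed.

Lemma frobeniusD (x y : L) : (x + y) ^+ q = x ^+ q + y ^+ q.
Proof.
have pL : p \in [pchar L].
  by apply: (@card_finPcharP L p (e.+1 * t)); rewrite // cardL -expnM.
by apply: exprDn_pchar; rewrite pnatX orbF (pnatE _ p_pr).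
Qed.

Lemma card_frobenius_fixed : #|[set c : L | c ^+ q == c]| = q.
Proof.
set Fq := [set c : L | _].
apply/eqP; rewrite eqn_leq card_expr_fixed_le ?prime_power_gt1 //=.
have q_gt0 := ltnW prime_power_gt1.
(* The subgroup of order q - 1 of the cyclic group of units consists of
   nonzero fixed points. *)
have [g gen] : exists g : {unit L}, [set: {unit L}] = <[g]>%g.
  exact/cyclicP/field_unit_group_cyclic.
set d := (\sum_(i < t) q ^ i)%N.
have d_gt0 : (0 < d)%N by rewrite /d; case: (t) t_gt0 => // t' _; rewrite big_ord_recl.
have ord_g : #[g]%g = (q.-1 * d)%N.
  by rewrite /order -gen card_finField_unit cardL predn_exp.
have ord_z : #[g ^+ d]%g = q.-1 by rewrite orderXdiv ord_g ?dvdn_mull // mulnK.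
have fixed_z : [set val x | x in <[g ^+ d]>%g] \subset Fq :\ 0.
  apply/subsetP=> _ /imsetP[x /order_dvdG xz ->]; rewrite !inE -unitfE (valP x) /=.
  move: xz; rewrite -/(#[g ^+ d]%g) ord_z order_dvdn => /eqP xq1.
  rewrite -(prednK q_gt0) exprSr -FinRing.val_unitX xq1.
  by rewrite FinRing.val_unit1 mul1r.
have := subset_leq_card fixed_z; rewrite card_imset; last exact: val_inj.
rewrite -/(#[g ^+ d]%g) ord_z [#|Fq|](cardsD1 0) inE expr0n gtn_eqF //= eqxx.
by rewrite -(prednK q_gt0).
Qed.

End FrobeniusFixedPoints.

Section MinimalBlockingSets.
Variables (L : finFieldType) (n : nat).
Local Notation V := 'rV[L]_n.
Implicit Types (isSub : {set V} -> Prop) (B : {set {set V}}).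

Definition tangent_at isSub B (X : {set V}) : Prop :=
  exists2 W, isSub W & forall Y, Y \in B -> Y \subset W -> Y = X.

Lemma minimal_blockingP isSub B : minimal_blocking isSub B <->
  blocking isSub B /\ {in B, forall X, tangent_at isSub B X}.
Proof.
split=> [[blB minB] | [blB tanB]].
  split=> // X XB; apply: NNPP => notan; apply: (minB (B :\ X)); first exact: properD1.
  move=> W sW; apply: NNPP => nblW; apply: notan; exists W => // Y YB YW.
  by apply: NNPP => YX; apply: nblW; exists Y; rewrite // !inE YB andbT; apply/eqP.
split=> // B' /properP[B'B [X XB XB']] blB'.
have [W sW tanW] := tanB X XB; have [Y YB' YW] := blB' W sW.
by case/negP: XB'; rewrite -(tanW Y (subsetP B'B Y YB') YW).
Qed.

End MinimalBlockingSets.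

Section Subspaces.
Variables (L : finFieldType) (q n : nat).
Hypotheses (q_gt1 : (1 < q)%N)
  (frobD : forall a b : L, (a + b) ^+ q = a ^+ q + b ^+ q)
  (card_fixed : #|[set c : L | c ^+ q == c]| = q).
Local Notation V := 'rV[L]_n.
Implicit Types (A B M N P Pi S W : {set V}) (u w x y z : V).

Lemma fixed0 : (0 : L) ^+ q = 0.
Proof. by rewrite expr0n gtn_eqF // ltnW. Qed.

Lemma fixedD (a c : L) : a ^+ q = a -> c ^+ q = c -> (a + c) ^+ q = a + c.
Proof. by rewrite frobD => -> ->. Qed.

Lemma fixedN (a : L) : a ^+ q = a -> (- a) ^+ q = - a.
Proof.
by move=> aq; apply/eqP; rewrite -addr_eq0 -{2}aq -frobD addNr fixed0.
Qed.

Lemma fixedM (a c : L) : a ^+ q = a -> c ^+ q = c -> (a * c) ^+ q = a * c.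
Proof. by rewrite exprMn => -> ->. Qed.

Lemma fixedV (a : L) : a ^+ q = a -> a^-1 ^+ q = a^-1.
Proof. by rewrite exprVn => ->. Qed.

Lemma FsubP S : reflect [/\ 0 \in S, {in S &, forall x y, x + y \in S}
  & forall c, c ^+ q = c -> {in S, forall x, c *: x \in S}] (Fsub q S).
Proof.
apply: (iffP and3P) => [[S0 /'forall_in_forall_inP SD /forallP SZ] | [S0 SD SZ]].
  split=> // [x y xS yS | c cq x xS]; first exact: SD.
  by move: (SZ c) => /forall_inP/(_ x xS)/implyP; apply; rewrite cq.
split=> //; first by apply/forall_inP=> x xS; apply/forall_inP=> y; apply: SD.
by apply/forallP=> c; apply/forall_inP=> x xS; apply/implyP=> /eqP cq; apply: SZ.
Qed.

Lemma LsubP S : reflect [/\ 0 \in S, {in S &, forall x y, x + y \in S}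
  & forall c, {in S, forall x, c *: x \in S}] (Lsub S).
Proof.
apply: (iffP and3P) => [[S0 /'forall_in_forall_inP SD /forallP SZ] | [S0 SD SZ]].
  split=> // [x y xS yS | c x xS]; first exact: SD.
  by move: (SZ c) => /forall_inP/(_ x xS).
split=> //; first by apply/forall_inP=> x xS; apply/forall_inP=> y; apply: SD.
by apply/forallP=> c; apply/forall_inP; apply: SZ.
Qed.

Lemma Fsub0 S : Fsub q S -> 0 \in S.
Proof. by case/FsubP. Qed.

Lemma FsubD S : Fsub q S -> {in S &, forall x y, x + y \in S}.
Proof. by case/FsubP. Qed.

Lemma FsubZ S (c : L) : Fsub q S -> c ^+ q = c -> {in S, forall x, c *: x \in S}.
Proof. by case/FsubP=> _ _ SZ /SZ. Qed.

Lemma FsubN S : Fsub q S -> {in S, forall x, - x \in S}.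
Proof. by move=> FS x xS; rewrite -scaleN1r (FsubZ FS) // fixedN // expr1n. Qed.

Lemma FsubB S : Fsub q S -> {in S &, forall x y, x - y \in S}.
Proof. by move=> FS x y xS yS; rewrite (FsubD FS) ?(FsubN FS). Qed.

Lemma Lsub0 S : Lsub S -> 0 \in S.
Proof. by case/LsubP. Qed.

Lemma LsubZ S (c : L) : Lsub S -> {in S, forall x, c *: x \in S}.
Proof. by case/LsubP=> _ _ /(_ c). Qed.

Lemma Lsub_Fsub S : Lsub S -> Fsub q S.
Proof. by case/LsubP=> S0 SD SZ; apply/FsubP; split=> // c _; apply: SZ. Qed.

Lemma FsubT : Fsub q [set: V].
Proof. by apply/FsubP; split=> [|x y _ _|c _ x _]; rewrite inE. Qed.

Lemma FsubI A B : Fsub q A -> Fsub q B -> Fsub q (A :&: B).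
Proof.
move=> /FsubP[A0 AD AZ] /FsubP[B0 BD BZ]; apply/FsubP; split.
- by rewrite inE A0 B0.
- by move=> x y /setIP[xA xB] /setIP[yA yB]; rewrite inE AD ?BD.
- by move=> c cq x /setIP[xA xB]; rewrite inE AZ ?BZ.
Qed.

Lemma card_Fsub_gt0 S : Fsub q S -> (0 < #|S|)%N.
Proof. by move/Fsub0=> S0; rewrite card_gt0; apply/set0Pn; exists 0. Qed.

(** For sets of vectors, the group product [(A * B)%g] in the additive group
    of [V] is the set of sums [a + b]; for subspaces it is their span. *)

Lemma mulsP A B x :
  reflect (exists a b, [/\ a \in A, b \in B & x = a + b]) (x \in (A * B)%g).
Proof.
apply: (iffP idP) => [/mulsgP[a b aA bB ->] | [a [b [aA bB ->]]]].
  by exists a, b.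
exact: mem_mulg.
Qed.

Lemma mem_muls A B a b : a \in A -> b \in B -> a + b \in (A * B)%g.
Proof. exact: mem_mulg. Qed.

Lemma mulsC A B : (A * B)%g = (B * A)%g.
Proof.
by apply/setP=> x; apply/mulsP/mulsP=> -[a [b [aA bB ->]]]; exists b, a; rewrite addrC.
Qed.

Lemma subset_mulsl A B : 0 \in B -> A \subset (A * B)%g.
Proof. by move=> B0; apply/subsetP=> x xA; rewrite -[x]addr0 mem_muls. Qed.

Lemma subset_mulsr A B : 0 \in A -> B \subset (A * B)%g.
Proof. by move=> A0; apply/subsetP=> x xB; rewrite -[x]add0r mem_muls. Qed.

Lemma muls_subset A B S : Fsub q S -> A \subset S -> B \subset S -> (A * B)%g \subset S.
Proof.
move=> /FsubD SD /subsetP AS /subsetP BS.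
by apply/subsetP=> _ /mulsP[a [b [/AS aS /BS bS ->]]]; apply: SD.
Qed.

Lemma Fsub_muls A B : Fsub q A -> Fsub q B -> Fsub q (A * B)%g.
Proof.
move=> /FsubP[A0 AD AZ] /FsubP[B0 BD BZ]; apply/FsubP; split.
- by rewrite -[0]addr0 mem_muls.
- move=> _ _ /mulsP[a [b [aA bB ->]]] /mulsP[a' [b' [aA' bB' ->]]].
  by rewrite addrACA mem_muls ?AD ?BD.
- move=> c cq _ /mulsP[a [b [aA bB ->]]].
  by rewrite scalerDr mem_muls ?AZ ?BZ.
Qed.

Lemma Lsub_muls A B : Lsub A -> Lsub B -> Lsub (A * B)%g.
Proof.
move=> /LsubP[A0 AD AZ] /LsubP[B0 BD BZ]; apply/LsubP; split.
- by rewrite -[0]addr0 mem_muls.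
- move=> _ _ /mulsP[a [b [aA bB ->]]] /mulsP[a' [b' [aA' bB' ->]]].
  by rewrite addrACA mem_muls ?AD ?BD.
- move=> c _ /mulsP[a [b [aA bB ->]]].
  by rewrite scalerDr mem_muls ?AZ ?BZ.
Qed.

Lemma card_muls A B : Fsub q A -> Fsub q B ->
  (#|A| * #|B| = #|(A * B)%g| * #|A :&: B|)%N.
Proof.
move=> FA FB; have gA : group_set A.
  by apply/andP; split; [exact: Fsub0 | exact: muls_subset].
have gB : group_set B.
  by apply/andP; split; [exact: Fsub0 | exact: muls_subset].
exact: (mul_cardG (Group gA) (Group gB)).
Qed.

Lemma card_muls_skew A B : Fsub q A -> Fsub q B ->
  {in A, forall x, x \in B -> x = 0} -> #|(A * B)%g| = (#|A| * #|B|)%N.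
Proof.
move=> FA FB skewAB; rewrite card_muls //.
suff -> : A :&: B = [set 0] by rewrite cards1 muln1.
apply/setP=> x; rewrite !inE; apply/andP/eqP => [[xA xB] | ->]; first exact: skewAB.
by rewrite !Fsub0.
Qed.

Lemma card_meet_lb A B S (a b s : nat) : Fsub q A -> Fsub q B -> Fsub q S ->
    A \subset S -> B \subset S ->
    (q ^ a <= #|A|)%N -> (q ^ b <= #|B|)%N -> (#|S| <= q ^ s)%N ->
  (q ^ (a + b - s) <= #|A :&: B|)%N.
Proof.
move=> FA FB FS AS BS Aa Bb Ss.
have [le_s_ab | /ltnW] := leqP s (a + b); last first.
  by rewrite -subn_eq0 => /eqP->; rewrite card_Fsub_gt0 ?FsubI.
rewrite -(@leq_pmul2l (q ^ s)) ?expn_gt0 ?(ltnW q_gt1) // -expnD subnKC //.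
rewrite expnD; apply: leq_trans (leq_mul Aa Bb) _.
rewrite card_muls // leq_mul2r; apply/orP; right.
exact: leq_trans (subset_leq_card (muls_subset FS AS BS)) Ss.
Qed.

Definition Fpt x : {set V} := [set c *: x | c in [set c : L | c ^+ q == c]].
Definition Lpt x : {set V} := [set c *: x | c : L].

Lemma FptP x y : reflect (exists2 c, c ^+ q = c & y = c *: x) (y \in Fpt x).
Proof.
apply: (iffP imsetP) => [[c] | [c cq ->]]; first by rewrite inE => /eqP; exists c.
by exists c; rewrite // inE cq.
Qed.

Lemma LptP x y : reflect (exists c, y = c *: x) (y \in Lpt x).
Proof. by apply: (iffP imsetP) => [[c _ ->] | [c ->]]; exists c. Qed.

Lemma Fpt_id x : x \in Fpt x.
Proof. by apply/FptP; exists 1; rewrite ?scale1r ?expr1n. Qed.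

Lemma Lpt_id x : x \in Lpt x.
Proof. by apply/LptP; exists 1; rewrite scale1r. Qed.

Lemma Fpt_Lpt x : Fpt x \subset Lpt x.
Proof. by apply/subsetP=> y /FptP[c _ ->]; apply/LptP; exists c. Qed.

Lemma Fsub_Fpt x : Fsub q (Fpt x).
Proof.
apply/FsubP; split.
- by apply/FptP; exists 0; rewrite ?scale0r ?fixed0.
- move=> _ _ /FptP[c cq ->] /FptP[d dq ->].
  by apply/FptP; exists (c + d); rewrite ?scalerDl ?fixedD.
- move=> a aq _ /FptP[c cq ->].
  by apply/FptP; exists (a * c); rewrite ?scalerA ?fixedM.
Qed.

Lemma Lsub_Lpt x : Lsub (Lpt x).
Proof.
apply/LsubP; split.
- by apply/LptP; exists 0; rewrite scale0r.
- by move=> _ _ /LptP[c ->] /LptP[d ->]; apply/LptP; exists (c + d); rewrite scalerDl.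
- by move=> a _ /LptP[c ->]; apply/LptP; exists (a * c); rewrite scalerA.
Qed.

Lemma Fpt_subset S x : Fsub q S -> x \in S -> Fpt x \subset S.
Proof. by move=> FS xS; apply/subsetP=> _ /FptP[c cq ->]; apply: FsubZ. Qed.

Lemma Lpt_subset S x : Lsub S -> x \in S -> Lpt x \subset S.
Proof. by move=> LS xS; apply/subsetP=> _ /LptP[c ->]; apply: LsubZ. Qed.

Lemma scalev_inj x : x != 0 -> injective (fun c : L => c *: x).
Proof.
move=> x0 c d /eqP; rewrite -subr_eq0 -scalerBl scaler_eq0 (negbTE x0) orbF.
by rewrite subr_eq0 => /eqP.
Qed.

Lemma card_Fpt x : x != 0 -> #|Fpt x| = q.
Proof. by move=> x0; rewrite card_imset ?card_fixed //; apply: scalev_inj. Qed.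

Lemma card_Lpt x : x != 0 -> #|Lpt x| = #|L|.
Proof. by move=> x0; rewrite card_imset ?cardsT //; apply: scalev_inj. Qed.

Lemma Fpoint_Fpt x : x != 0 -> Fpoint q (Fpt x).
Proof. by move=> x0; rewrite /Fpoint Fsub_Fpt card_Fpt ?eqxx. Qed.

Lemma Lpoint_Lpt x : x != 0 -> Lpoint (Lpt x).
Proof. by move=> x0; rewrite /Lpoint Lsub_Lpt card_Lpt ?eqxx. Qed.

Lemma FpointE P x : Fpoint q P -> x \in P -> x != 0 -> P = Fpt x.
Proof.
case/andP=> FP /eqP cardP xP x0; apply/eqP; rewrite eq_sym eqEcard Fpt_subset //.
by rewrite /= card_Fpt // cardP.
Qed.

Lemma LpointE X x : Lpoint X -> x \in X -> x != 0 -> X = Lpt x.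
Proof.
case/andP=> LX /eqP cardX xX x0; apply/eqP; rewrite eq_sym eqEcard Lpt_subset //.
by rewrite /= card_Lpt // cardX.
Qed.

Lemma Lpt_eq x y : y \in Lpt x -> y != 0 -> Lpt y = Lpt x.
Proof.
have [-> /LptP[c ->] | x0 yx y0] := eqVneq x 0; first by rewrite scaler0 eqxx.
by rewrite -(LpointE (Lpoint_Lpt x0) yx y0).
Qed.

Lemma Fpt_skew S w : Fsub q S -> w \notin S -> {in S, forall z, z \in Fpt w -> z = 0}.
Proof.
move=> FS wS z zS /FptP[c cq zE]; rewrite zE in zS *.
have [-> | c0] := eqVneq c 0; first by rewrite scale0r.
case/negP: wS; rewrite -[w]scale1r -(mulVf c0) -scalerA.
by rewrite (FsubZ FS) // fixedV.
Qed.

Lemma Lpt_skew S w : Lsub S -> w \notin S -> {in S, forall z, z \in Lpt w -> z = 0}.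
Proof.
move=> LS wS z zS /LptP[c zE]; rewrite zE in zS *.
have [-> | c0] := eqVneq c 0; first by rewrite scale0r.
by case/negP: wS; rewrite -[w]scale1r -(mulVf c0) -scalerA (LsubZ _ LS).
Qed.

Lemma card_muls_Fpt S w : Fsub q S -> w \notin S -> #|(S * Fpt w)%g| = (#|S| * q)%N.
Proof.
move=> FS wS; have w0 : w != 0 by apply: contraNneq wS => ->; apply: Fsub0.
by rewrite card_muls_skew ?Fsub_Fpt ?card_Fpt //; apply: Fpt_skew.
Qed.

Lemma card_muls_Lpt S w : Lsub S -> w \notin S -> #|(S * Lpt w)%g| = (#|S| * #|L|)%N.
Proof.
move=> LS wS; have w0 : w != 0 by apply: contraNneq wS => ->; apply: Lsub0.
by rewrite card_muls_skew ?Lsub_Fsub ?Lsub_Lpt ?card_Lpt //; apply: Lpt_skew.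
Qed.

Lemma card_lt_notin A B : (#|A| < #|B|)%N -> exists2 x, x \in B & x \notin A.
Proof.
move=> ltAB; apply/subsetPn; apply: contraTN ltAB => /subset_leq_card.
by rewrite leqNgt.
Qed.

Lemma exists_Fline S : Fsub q S -> (q ^ 2 <= #|S|)%N ->
  exists2 l, Fpdim q l 1 & l \subset S.
Proof.
move=> FS leS; have [x xS] : exists2 x, x \in S & x \notin [set 0].
  by apply: card_lt_notin; rewrite cards1 (leq_trans _ leS) // -{1}(expn0 q) ltn_exp2l.
rewrite inE => x0; have [y yS yx] : exists2 y, y \in S & y \notin Fpt x.
  by apply: card_lt_notin; rewrite card_Fpt // (leq_trans _ leS) // -{1}(expn1 q) ltn_exp2l.
exists (Fpt x * Fpt y)%g; last by rewrite muls_subset ?Fpt_subset.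
by split; rewrite ?Fsub_muls ?Fsub_Fpt // card_muls_Fpt ?Fsub_Fpt ?card_Fpt ?mulnn.
Qed.

Lemma Lsub_extend M N j : Lsub M -> Lsub N -> N \subset M ->
    (#|M| * #|L| ^ j <= #|L| ^ n)%N ->
  exists W, [/\ Lsub W, W :&: M = N & #|W| = (#|N| * #|L| ^ j)%N].
Proof.
move=> LM LN NM; have L_gt1 := card_finNzRing_gt1 L.
elim: j => [|j IHj] le_MLn.
  by exists N; rewrite expn0 muln1; split=> //; apply/setIidPl.
have [|W [LW WM cardW]] := IHj.
  by apply: leq_trans le_MLn; rewrite leq_mul2l leq_pexp2l ?orbT // ltnW.
have [x _ xWM] : exists2 x, x \in [set: V] & x \notin (W * M)%g.
  apply: card_lt_notin; rewrite cardsT card_mx mul1n.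
  apply: leq_trans le_MLn; rewrite -(ltn_pmul2r (card_Fsub_gt0 (Lsub_Fsub LN))).
  rewrite -{1}WM -card_muls ?Lsub_Fsub // cardW expnS.
  have -> : (#|M| * (#|L| * #|L| ^ j) * #|N| = #|N| * #|L| ^ j * #|M| * #|L|)%N.
    by ring.
  rewrite -[X in (X < _)%N]muln1 ltn_pmul2l //.
  by rewrite !muln_gt0 expn_gt0 (ltnW L_gt1) !card_Fsub_gt0 ?Lsub_Fsub.
have xW : x \notin W by apply: contra xWM; apply/subsetP/subset_mulsl/Lsub0.
exists (W * Lpt x)%g; split; first by rewrite Lsub_muls ?Lsub_Lpt.
  apply/setP=> y; apply/setIP/idP=> [[/mulsP[w [_ [wW /LptP[c ->] ->]]] yM] | yN].
    have [c0 | c0] := eqVneq c 0.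
      by move: yM; rewrite c0 scale0r addr0 -WM inE wW => ->.
    case/negP: xWM; apply/mulsP; exists (- c^-1 *: w), (c^-1 *: (w + c *: x)).
    split; [exact: LsubZ | exact: LsubZ |].
    by rewrite scalerDr scalerA mulVf // scale1r addrA scaleNr addNr add0r.
  have := yN; rewrite -WM => /setIP[yW yM]; split=> //.
  exact: subsetP (subset_mulsl _ (Lsub0 (Lsub_Lpt x))) _ yW.
by rewrite card_muls_Lpt // cardW expnSr mulnA.
Qed.

Lemma Fspan_setU A B : Fsub q A -> Fsub q B -> Fspan q (A :|: B) = (A * B)%g.
Proof.
move=> FA FB; apply/eqP; rewrite eqEsubset; apply/andP; split.
  by rewrite bigcap_inf // Fsub_muls //= subUset subset_mulsl ?subset_mulsr ?Fsub0.
by apply/bigcapsP=> S /andP[FS]; rewrite subUset => /andP[AS BS]; apply: muls_subset.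
Qed.

Lemma subset_Lspan_Bset_Fpoints Pi : Fsub q Pi ->
  Pi \subset Lspan (\bigcup_(X in Bset (Fpoints_of q Pi)) X).
Proof.
move=> FPi; apply/subsetP=> x xPi; apply/bigcapP=> S /andP[LS /subsetP sub].
have [-> | x0] := eqVneq x 0; first exact: Lsub0.
apply/sub/bigcupP; exists (Lpt x); last exact: Lpt_id.
rewrite inE Lpoint_Lpt //=; apply/existsP; exists (Fpt x).
rewrite inE Fpoint_Fpt ?Fpt_subset //=.
by apply/existsP; exists x; rewrite x0 Fpt_id Lpt_id.
Qed.

Lemma Lspan_Bset_Fpoints_min Pi S : Lsub S -> Pi \subset S ->
  Lspan (\bigcup_(X in Bset (Fpoints_of q Pi)) X) \subset S.
Proof.
move=> LS PiS; apply: bigcap_inf; rewrite LS /=.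
apply/bigcupsP=> X; rewrite inE => /andP[LX /existsP[P /andP[]]].
rewrite inE => /andP[FP PPi] /existsP[v /and3P[v0 vP vX]].
by rewrite (LpointE LX vX v0) Lpt_subset // (subsetP PiS) ?(subsetP PPi).
Qed.

Lemma exists_Lline_meet_in_Lpt M Pi u : Lsub M -> Fsub q Pi -> Pi \subset M ->
    (#|L| * #|Pi| < #|M|)%N -> u != 0 -> Lpt u \subset Pi ->
  exists N, [/\ Lsub N, N \subset M, #|N| = (#|L| ^ 2)%N & N :&: Pi \subset Lpt u].
Proof.
move=> LM FPi PiM ltM u0 uPi.
(* The L-points through Pi cover at most |L| |Pi| < |M| vectors. *)
have [w wM wPi] : exists2 w, w \in M & w \notin [set c *: y | c in [set: L], y in Pi].
  apply: card_lt_notin; apply: leq_ltn_trans ltM.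
  by rewrite -cardsT -cardsX curry_imset2X leq_imset_card.
have cwPi c : c *: w \in Pi -> c = 0.
  move=> cw; apply/eqP; apply: contraNT wPi => c0.
  by apply/imset2P; exists c^-1 (c *: w); rewrite ?inE // scalerA mulVf ?scale1r.
have wu : w \notin Lpt u.
  apply: contra wPi => /LptP[c ->]; apply/imset2P; exists c u; rewrite ?inE //.
  by rewrite (subsetP uPi) ?Lpt_id.
exists (Lpt u * Lpt w)%g; split.
- by rewrite Lsub_muls ?Lsub_Lpt.
- by rewrite muls_subset ?Lsub_Fsub ?Lpt_subset // (subsetP PiM) // (subsetP uPi) ?Lpt_id.
- by rewrite card_muls_Lpt ?Lsub_Lpt ?card_Lpt ?mulnn.
apply/subsetP=> _ /setIP[/mulsP[_ [_ [/LptP[a ->] /LptP[c ->] ->]]] yPi].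
have auPi : a *: u \in Pi by rewrite (subsetP uPi) //; apply/LptP; exists a.
have := FsubB FPi yPi auPi; rewrite addrAC subrr add0r => /cwPi ->.
by rewrite scale0r addr0; apply/LptP; exists a.
Qed.

Lemma Fpoint_nonzero P : Fpoint q P -> exists2 x, x \in P & x != 0.
Proof.
case/andP=> _ /eqP cardP; have [x xP] : exists2 x, x \in P & x \notin [set 0].
  by apply: card_lt_notin; rewrite cards1 cardP.
by exists x; rewrite // -in_set1.
Qed.

Lemma card_muls_le A B : Fsub q A -> Fsub q B -> (#|(A * B)%g| <= #|A| * #|B|)%N.
Proof.
move=> FA FB; rewrite card_muls // -[X in (X <= _)%N]muln1 leq_mul2l.
by rewrite card_Fsub_gt0 ?orbT ?FsubI.
Qed.

Lemma card_Lpt_le x : (#|Lpt x| <= #|L|)%N.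
Proof. exact: leq_imset_card. Qed.

Section Cone.
Variables (k t : nat) (nu Pi Om Ga : {set V}) (Bb : {set {set V}}).
Hypotheses (k_gt0 : (0 < k)%N) (k_lt_n : (k < n)%N) (t_ge4 : (4 <= t)%N)
  (cardL : #|L| = (q ^ t)%N)
  (Hnu : Dsubspace nu (n - k))
  (HPi : Fpdim q Pi (n * t - k * t + 1))
  (nu_Pi : nu \subset Pi)
  (HM : Lpdim (Lspan (\bigcup_(X in Bset (Fpoints_of q Pi)) X)) (n - k + 1))
  (HOm : Fpdim q Om (n * t - k * t - 2))
  (Om_Pi : Om \subset Pi)
  (HOm_nu : Fpdim q (Om :&: nu) (n * t - k * t - 4))
  (HGa : Fpdim q Ga 2)
  (Ga_Pi : Ga \subset Pi)
  (Ga_Om : Ga :&: Om = [set 0])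
  (Bb_Ga : Bb \subset Fpoints_of q Ga)
  (Bb_min : minimal_blocking (fun l => Fpdim q l 1 /\ l \subset Ga) Bb).

Local Notation T := (n * t - k * t)%N.
Local Notation M := (Lspan (\bigcup_(X in Bset (Fpoints_of q Pi)) X)).

Definition cone_vectors := \bigcup_(b in Bb) (Om * b)%g.
Local Notation K := cone_vectors.

Lemma T_ge4 : (4 <= T)%N.
Proof. by rewrite -mulnBl (leq_trans t_ge4) // leq_pmull // subn_gt0. Qed.

Lemma Fsub_Pi : Fsub q Pi. Proof. by case: HPi. Qed.
Lemma Fsub_Om : Fsub q Om. Proof. by case: HOm. Qed.
Lemma Fsub_Ga : Fsub q Ga. Proof. by case: HGa. Qed.
Lemma Lsub_nu : Lsub nu. Proof. by case: Hnu. Qed.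
Lemma Lsub_M : Lsub M. Proof. by case: HM. Qed.

Lemma card_Pi : #|Pi| = (q ^ (T + 2))%N.
Proof. by case: HPi => _ ->; rewrite -addnS. Qed.

Lemma card_Om : #|Om| = (q ^ (T - 1))%N.
Proof. by case: HOm => _ ->; congr (_ ^ _)%N; have := T_ge4; lia. Qed.

Lemma card_Om_nu : #|Om :&: nu| = (q ^ (T - 3))%N.
Proof. by case: HOm_nu => _ ->; congr (_ ^ _)%N; have := T_ge4; lia. Qed.

Lemma card_Ga : #|Ga| = (q ^ 3)%N.
Proof. by case: HGa. Qed.

Lemma card_nu : #|nu| = (q ^ T)%N.
Proof. by case: Hnu => _ ->; rewrite cardL -expnM mulnC mulnBl. Qed.

Lemma card_M : #|M| = (#|L| ^ (n - k + 2))%N.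
Proof. by case: HM => _ ->; rewrite -addnS. Qed.

Lemma Pi_M : Pi \subset M.
Proof. exact: subset_Lspan_Bset_Fpoints Fsub_Pi. Qed.

Lemma Om_Ga_eq0 x : x \in Om -> x \in Ga -> x = 0.
Proof. by move=> xOm xGa; apply/set1P; rewrite -Ga_Om inE xGa. Qed.

Lemma Om_nu : (Om * nu)%g = Pi.
Proof.
apply/eqP; rewrite eqEcard muls_subset ?Fsub_Pi //=.
rewrite -(leq_pmul2r (card_Fsub_gt0 (FsubI Fsub_Om (Lsub_Fsub Lsub_nu)))).
rewrite -(card_muls Fsub_Om (Lsub_Fsub Lsub_nu)).
rewrite card_Pi card_Om card_nu card_Om_nu -!expnD.
by rewrite leq_exp2l //; have := T_ge4; lia.
Qed.

Lemma Bb_Fpoint b : b \in Bb -> Fpoint q b /\ b \subset Ga.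
Proof. by move/(subsetP Bb_Ga); rewrite inE => /andP[]. Qed.

Lemma Fsub_Bb b : b \in Bb -> Fsub q b.
Proof. by case/Bb_Fpoint=> /andP[]. Qed.

Lemma K_Pi : K \subset Pi.
Proof.
apply/bigcupsP=> b /Bb_Fpoint[/andP[Fb _] bGa].
by rewrite muls_subset ?Fsub_Pi // (subset_trans bGa).
Qed.

Lemma Bset_coneP X :
  reflect (exists2 u, u \in K :\ 0 & X = Lpt u) (X \in Bset (cone q Om Bb)).
Proof.
have FspanE b : b \in Bb -> Fspan q (b :|: Om) = (Om * b)%g.
  by move=> bB; rewrite Fspan_setU ?Fsub_Om ?Fsub_Bb // mulsC.
apply: (iffP idP) => [| [u /setD1P[u0 /bigcupP[b bB ub]] ->]].
  rewrite inE => /andP[LX /existsP[P /andP[]]].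
  rewrite inE => /andP[FP /existsP[b /andP[bB]]].
  rewrite FspanE // => PK /existsP[v /and3P[v0 vP vX]].
  exists v; last exact: LpointE.
  by rewrite !inE v0; apply/bigcupP; exists b; rewrite ?(subsetP PK).
rewrite inE Lpoint_Lpt //=; apply/existsP; exists (Fpt u).
rewrite inE Fpoint_Fpt //=; apply/andP; split.
  by apply/existsP; exists b; rewrite bB FspanE // Fpt_subset ?Fsub_muls ?Fsub_Om ?Fsub_Bb.
by apply/existsP; exists u; rewrite u0 Fpt_id Lpt_id.
Qed.

Lemma Bb_nonempty : exists b, b \in Bb.
Proof.
have [l dim_l lGa] : exists2 l, Fpdim q l 1 & l \subset Ga.
  by apply: exists_Fline; rewrite ?Fsub_Ga // card_Ga leq_exp2l.
by have [b bB _] := Bb_min.1 l (conj dim_l lGa); exists b.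
Qed.

Lemma cone_meets_Flines l : Fpdim q l 1 -> l \subset Pi ->
  exists2 s, s \in K :\ 0 & s \in l.
Proof.
case=> Fl card_l lPi; have [lOm0 | [o]] := set_0Vmem ((l :&: Om) :\ 0); last first.
  rewrite !inE => /and3P[o0 ol oOm]; have [b bB] := Bb_nonempty.
  exists o => //; rewrite !inE o0; apply/bigcupP; exists b => //.
  by rewrite -[o]addr0 mem_muls ?Fsub0 ?Fsub_Bb.
have skew_l_Om : {in l, forall x, x \in Om -> x = 0}.
  move=> x xl xOm; apply/eqP; apply: contraT => x0.
  have : x \in (l :&: Om) :\ 0 by rewrite !inE x0 xl xOm.
  by rewrite lOm0 inE.
(* l * Om is a hyperplane of Pi, so it meets the plane Ga in a line. *)
have card_lOm : #|(l * Om)%g| = (q ^ (T + 1))%N.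
  rewrite card_muls_skew ?Fsub_Om // card_l card_Om -expnD.
  by congr (_ ^ _)%N; have := T_ge4; lia.
have [l' dim_l' l'_sub] : exists2 l', Fpdim q l' 1 & l' \subset Ga :&: (l * Om)%g.
  apply: exists_Fline; first by rewrite FsubI ?Fsub_muls ?Fsub_Ga ?Fsub_Om.
  have := card_meet_lb (a := 3) (b := T + 1) (s := T + 2)
    Fsub_Ga (Fsub_muls Fl Fsub_Om) Fsub_Pi.
  rewrite (_ : 3 + (T + 1) - (T + 2) = 2)%N; last by lia.
  by apply; rewrite ?card_Ga ?card_lOm ?card_Pi ?muls_subset ?Fsub_Pi.
have [b bB bl'] := Bb_min.1 l' (conj dim_l' (subset_trans l'_sub (subsetIl _ _))).
have [be beb be0] := Fpoint_nonzero (Bb_Fpoint bB).1.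
have /setIP[beGa /mulsP[s [o [sl oOm beE]]]] := subsetP l'_sub be (subsetP bl' be beb).
exists s => //; rewrite !inE; apply/andP; split.
  apply: contra be0 => /eqP s0; rewrite beE s0 add0r; apply/eqP/Om_Ga_eq0 => //.
  by move: beGa; rewrite beE s0 add0r.
apply/bigcupP; exists b => //; rewrite -[s](addKr o) (addrC o s) -beE.
by rewrite mem_muls ?(FsubN Fsub_Om).
Qed.

Lemma cone_blocks W : Lpdim W (k - 1) -> exists2 s, s \in K :\ 0 & s \in W.
Proof.
case=> LW card_W; have [l dim_l l_sub] : exists2 l, Fpdim q l 1 & l \subset W :&: Pi.
  apply: exists_Fline; first by rewrite FsubI ?Fsub_Pi ?Lsub_Fsub.
  have := card_meet_lb (a := k * t) (b := T + 2) (s := n * t)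
    (Lsub_Fsub LW) Fsub_Pi FsubT.
  have kt_le_nt : (k * t <= n * t)%N by rewrite leq_mul2r ltnW ?orbT.
  rewrite (_ : k * t + (T + 2) - n * t = 2)%N; last by lia.
  apply; rewrite ?subsetT ?card_Pi //.
    by rewrite card_W cardL -expnM subn1 prednK // mulnC.
  by rewrite cardsT card_mx mul1n cardL -expnM mulnC.
have [s sK sl] := cone_meets_Flines dim_l (subset_trans l_sub (subsetIr _ _)).
by exists s; rewrite // (subsetP (subset_trans l_sub (subsetIl _ _))).
Qed.
Lemma tangent_Lline_on_nu u : u \in nu -> u != 0 ->
  exists N, [/\ Lsub N, N \subset M, #|N| = (#|L| ^ 2)%N & N :&: K \subset Lpt u].
Proof.
move=> unu u0; have lt_M : (#|L| * #|Pi| < #|M|)%N.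
  rewrite card_M cardL card_Pi -!expnM -expnD ltn_exp2l // -mulnBl.
  by move: t_ge4 k_lt_n; nia.
have uPi : Lpt u \subset Pi by rewrite (subset_trans _ nu_Pi) ?Lpt_subset ?Lsub_nu.
have [N [LN NM card_N NPi]] := exists_Lline_meet_in_Lpt Lsub_M Fsub_Pi Pi_M lt_M u0 uPi.
by exists N; split=> //; apply: subset_trans NPi; rewrite setIS ?K_Pi.
Qed.

Lemma Lline_over_Fline u w : u \in Pi -> w \in Pi ->
    (nu * (Fpt u * Fpt w))%g = Pi ->
  [/\ Lsub (Lpt u * Lpt w)%g, (Lpt u * Lpt w)%g \subset M,
      #|(Lpt u * Lpt w)%g| = (#|L| ^ 2)%N
    & (Lpt u * Lpt w)%g :&: Pi \subset (Fpt u * Fpt w)%g].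
Proof.
move=> uPi wPi nuS; set N := (Lpt u * Lpt w)%g; set S := (Fpt u * Fpt w)%g.
have LN : Lsub N by rewrite Lsub_muls ?Lsub_Lpt.
have SN : S \subset N by rewrite mulgSS ?Fpt_Lpt.
(* <nu, N>_L contains Pi, hence M, and |M| = |nu| |L|^2 leaves no room for
   nu :&: N to be nontrivial. *)
have M_nuN : M \subset (nu * N)%g.
  apply: Lspan_Bset_Fpoints_min; first by rewrite Lsub_muls ?Lsub_nu.
  by rewrite -{1}nuS mulgSS.
have N_le : (#|N| <= #|L| ^ 2)%N.
  rewrite (leq_trans (card_muls_le _ _)) ?Lsub_Fsub ?Lsub_Lpt //.
  by rewrite -mulnn leq_mul ?card_Lpt_le.
have le_nuN : (#|L| ^ 2 * #|nu :&: N| <= #|N|)%N.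
  rewrite -(leq_pmul2r (card_Fsub_gt0 (Lsub_Fsub Lsub_nu))) mulnAC.
  have -> : (#|L| ^ 2 * #|nu| = #|M|)%N.
    by rewrite card_M; case: Hnu => _ ->; rewrite -expnD addnC.
  rewrite [X in (_ <= X)%N]mulnC (card_muls (Lsub_Fsub Lsub_nu) (Lsub_Fsub LN)) leq_mul2r.
  by rewrite subset_leq_card ?orbT.
have nuN_gt0 := card_Fsub_gt0 (FsubI (Lsub_Fsub Lsub_nu) (Lsub_Fsub LN)).
have card_N : #|N| = (#|L| ^ 2)%N.
  by apply/eqP; rewrite eqn_leq N_le (leq_trans (leq_pmulr _ nuN_gt0)).
have nuN0 : nu :&: N = [set 0].
  apply/eqP; rewrite eq_sym eqEcard sub1set inE Lsub0 ?Lsub_nu // Lsub0 //= cards1.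
  by rewrite -(leq_pmul2l (card_Fsub_gt0 (Lsub_Fsub LN))) muln1 {1}card_N.
split=> //.
  by rewrite muls_subset ?Lsub_Fsub ?Lsub_M ?Lpt_subset ?Lsub_M ?(subsetP Pi_M).
apply/subsetP=> y /setIP[yN]; rewrite -nuS => /mulsP[z [s [znu sS yE]]].
have zN : z \in N.
  by rewrite -[z](addrK s) -yE; apply: (FsubB (Lsub_Fsub LN)) => //; apply: (subsetP SN).
have : z \in nu :&: N by rewrite inE znu zN.
by rewrite nuN0 inE yE => /eqP->; rewrite add0r.
Qed.

Lemma tangent_Fline_Ga b0 : b0 \in Bb -> exists l, [/\ Fpdim q l 1, l \subset Ga,
  b0 \subset l & forall b, b \in Bb -> b \subset l -> b = b0].
Proof.
move=> b0B; have [blB /(_ b0 b0B)[l [dim_l lGa] tan_l]] :=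
  (minimal_blockingP _ _).1 Bb_min.
have [b bB bl] := blB l (conj dim_l lGa).
by exists l; split=> //; rewrite -(tan_l b bB bl).
Qed.

Lemma cone_vectors_Om_join l b0 : b0 \in Bb -> Fsub q l -> l \subset Ga ->
    (forall b, b \in Bb -> b \subset l -> b = b0) ->
  {in (Om * l)%g, forall y, y \in K -> y \in (Om * b0)%g}.
Proof.
move=> b0B Fl lGa tan_l _ /mulsP[o [x [oOm xl ->]]].
case/bigcupP=> b bB /mulsP[o' [y [o'Om yb E]]].
have [Pb bGa] := Bb_Fpoint bB.
have xy : x = y.
  apply/eqP; rewrite -subr_eq0; apply/eqP/Om_Ga_eq0.
    have -> : x - y = o' - o by apply/eqP; rewrite subr_eq addrAC -E addrC addKr.
    exact: (FsubB Fsub_Om).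
  by apply: (FsubB Fsub_Ga); [apply: (subsetP lGa) | apply: (subsetP bGa)].
rewrite xy mem_muls //; have [-> | y0] := eqVneq y 0; first exact: Fsub0 (Fsub_Bb b0B).
have bl : b \subset l by rewrite (FpointE Pb yb y0) Fpt_subset // -xy.
by rewrite -(tan_l b bB bl).
Qed.

Lemma Om_join_uncovered l b0 u : Fpdim q l 1 -> l \subset Ga -> b0 \in Bb ->
    b0 \subset l -> u \in Pi -> u \notin nu ->
  exists2 w, w \in (Om * l)%g & w \notin (Om * b0)%g :|: (nu * Fpt u)%g.
Proof.
case=> Fl card_l lGa b0B b0l uPi unu.
have [/andP[Fb0 /eqP card_b0] b0Ga] := Bb_Fpoint b0B.
set H := (Om * l)%g; set A := (nu * Fpt u)%g; set Ob0 := (Om * b0)%g.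
have FH : Fsub q H by rewrite Fsub_muls ?Fsub_Om.
have FA : Fsub q A by rewrite Fsub_muls ?Fsub_Fpt ?Lsub_Fsub ?Lsub_nu.
have FOb0 : Fsub q Ob0 by rewrite Fsub_muls ?Fsub_Om.
have T4 := T_ge4.
have card_H : #|H| = (q ^ (T + 1))%N.
  rewrite (card_muls_skew Fsub_Om Fl) ?card_Om ?card_l -?expnD.
    by congr (_ ^ _)%N; clear -T4; lia.
  by move=> x xOm /(subsetP lGa); apply: Om_Ga_eq0.
have card_Ob0 : #|Ob0| = (q ^ T)%N.
  rewrite (card_muls_skew Fsub_Om Fb0) ?card_Om ?card_b0 -?expnSr.
    by congr (_ ^ _)%N; clear -T4; lia.
  by move=> x xOm /(subsetP b0Ga); apply: Om_Ga_eq0.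
have card_A : #|A| = (q ^ (T + 1))%N.
  by rewrite card_muls_Fpt ?Lsub_Fsub ?Lsub_nu // card_nu addn1 expnSr.
have AH : (A * H)%g = Pi.
  have A_Pi : A \subset Pi by rewrite muls_subset ?Fsub_Pi ?Fpt_subset ?Fsub_Pi.
  have H_Pi : H \subset Pi by rewrite muls_subset ?Fsub_Pi ?(subset_trans lGa).
  apply/eqP; rewrite eqEsubset muls_subset ?Fsub_Pi //=.
  by rewrite -{1}Om_nu mulsC mulgSS ?subset_mulsl ?(Fsub0 Fl) ?(Fsub0 (Fsub_Fpt u)).
have card_AH : #|A :&: H| = (q ^ T)%N.
  apply/eqP; rewrite -(eqn_pmul2l (card_Fsub_gt0 Fsub_Pi)) -{1}AH -card_muls //.
  rewrite card_A card_H card_Pi -!expnD; apply/eqP; congr (_ ^ _)%N.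
  by clear -T4; lia.
(* Om * b0 and A :&: H are hyperplanes of H sharing 0. *)
have [w wH] : exists2 w, w \in H & w \notin Ob0 :|: (A :&: H).
  apply: card_lt_notin; rewrite cardsU card_Ob0 card_AH card_H.
  have : (0 < #|Ob0 :&: (A :&: H)|)%N by rewrite card_Fsub_gt0 // !FsubI.
  have : (2 * q ^ T <= q ^ (T + 1))%N.
    by rewrite expnD expn1 mulnC leq_mul2l q_gt1 orbT.
  have : (0 < q ^ T)%N by rewrite expn_gt0 ltnW.
  move: #|_ :&: _| (q ^ T)%N (q ^ (T + 1))%N => c a b a_gt0 le_ab c_gt0.
  by clear -a_gt0 le_ab c_gt0; lia.
rewrite !inE !negb_or wH andbT => /andP[wOb0 wA].
by exists w; rewrite // inE negb_or wOb0.
Qed.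

Lemma tangent_Lline_off_nu u : u \in K :\ 0 -> u \notin nu ->
  exists N, [/\ Lsub N, N \subset M, #|N| = (#|L| ^ 2)%N & N :&: K \subset Lpt u].
Proof.
case/setD1P=> u0 /bigcupP[b0 b0B ub0] unu.
have [l [dim_l lGa b0l tan_l]] := tangent_Fline_Ga b0B.
have Fl : Fsub q l by case: dim_l.
have FH : Fsub q (Om * l)%g by rewrite Fsub_muls ?Fsub_Om.
have FOb0 : Fsub q (Om * b0)%g by rewrite Fsub_muls ?Fsub_Om ?Fsub_Bb.
have H_Pi : (Om * l)%g \subset Pi by rewrite muls_subset ?Fsub_Pi ?(subset_trans lGa).
have uH : u \in (Om * l)%g by rewrite (subsetP (mulgSS (subxx Om) b0l)).
have uPi : u \in Pi by rewrite (subsetP H_Pi).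
have [w wH] := Om_join_uncovered dim_l lGa b0B b0l uPi unu.
rewrite inE negb_or => /andP[wOb0 wA].
have wPi : w \in Pi by rewrite (subsetP H_Pi).
have nuS : (nu * (Fpt u * Fpt w))%g = Pi.
  apply/eqP; rewrite eqEcard !muls_subset ?Fpt_subset ?Fsub_Pi //=.
  rewrite mulgA card_muls_Fpt ?Fsub_muls ?Fsub_Fpt ?Lsub_Fsub ?Lsub_nu //.
  by rewrite card_muls_Fpt ?Lsub_Fsub ?Lsub_nu // card_nu card_Pi -!expnSr addn2.
have [LN NM card_N NPi] := Lline_over_Fline uPi wPi nuS.
exists (Lpt u * Lpt w)%g; split=> //; apply/subsetP=> y /setIP[yN yK].
have /mulsP[_ [_ [/FptP[a aq ->] /FptP[c cq ->] yE]]] : y \in (Fpt u * Fpt w)%g.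
  by rewrite (subsetP NPi) // inE yN (subsetP K_Pi).
have [c0 | c0] := eqVneq c 0; first by rewrite yE c0 scale0r addr0; apply/LptP; exists a.
(* Cone vectors of Om * l lie in Om * b0, and so would w. *)
have yOb0 : y \in (Om * b0)%g.
  apply: (cone_vectors_Om_join b0B Fl lGa tan_l) => //.
  by rewrite yE (FsubD FH) // (FsubZ FH).
case/negP: wOb0; have -> : w = c^-1 *: (y - a *: u).
  by rewrite yE addrAC subrr add0r scalerA mulVf ?scale1r.
by rewrite (FsubZ FOb0) ?fixedV // (FsubB FOb0) // (FsubZ FOb0).
Qed.

Lemma tangent_cone u : u \in K :\ 0 -> exists2 W, Lpdim W (k - 1) & W :&: K \subset Lpt u.
Proof.
move=> uK; have u0 : u != 0 by case/setD1P: uK.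
have [N [LN NM card_N NK]] :
    exists N, [/\ Lsub N, N \subset M, #|N| = (#|L| ^ 2)%N & N :&: K \subset Lpt u].
  have [unu | unu] := boolP (u \in nu); first exact: tangent_Lline_on_nu.
  exact: tangent_Lline_off_nu.
have [k_le1 | k_gt1] := leqP k 1.
  exists (Lpt u); last exact: subsetIl.
  split; rewrite ?Lsub_Lpt // card_Lpt // (_ : k - 1 = 0)%N ?expn1 //.
  by clear -k_le1; lia.
have [|W [LW WM card_W]] := Lsub_extend (j := (k - 2)%N) Lsub_M LN NM.
  by rewrite card_M -expnD; apply: eq_leq; congr (_ ^ _)%N; clear -k_gt1 k_lt_n; lia.
exists W.
  by split=> //; rewrite card_W card_N -expnD; congr (_ ^ _)%N; clear -k_gt1; lia.
apply/subsetP=> y /setIP[yW yK]; apply: (subsetP NK).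
by rewrite inE yK -WM inE yW (subsetP Pi_M) ?(subsetP K_Pi).
Qed.

Lemma Bset_cone_minimal_blocking :
  minimal_blocking (fun W => Lpdim W (k - 1)) (Bset (cone q Om Bb)).
Proof.
apply/minimal_blockingP; split.
  move=> W dimW; have [s sK sW] := cone_blocks dimW.
  exists (Lpt s); first by apply/Bset_coneP; exists s.
  by rewrite Lpt_subset //; case: dimW.
move=> _ /Bset_coneP[u uK ->]; have [W dimW WK] := tangent_cone uK.
exists W => // _ /Bset_coneP[y /setD1P[y0 yK] ->] yW.
by apply: Lpt_eq y0; apply: (subsetP WK); rewrite inE yK (subsetP yW) ?Lpt_id.
Qed.

End Cone.

End Subspaces.

Local Close Scope ring_scope.

Theorem theorem4p10
  (n k t q : nat) (L : finFieldType)
  (Hk0 : (0 < k)%N) (Hkn : (k < n)%N) (Ht : (4 <= t)%N)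
  (Hq : exists p e : nat, prime p /\ q = (p ^ e.+1)%N)
  (HL : #|L| = (q ^ t)%N)
  (nu Pi Om Ga : {set 'rV[L]_n}) (Bb : {set {set 'rV[L]_n}})
  (Hnu : Dsubspace nu (n - k))
  (HPi : Fpdim q Pi (n * t - k * t + 1))
  (HnuPi : nu \subset Pi)
  (HBPi : Lpdim (Lspan (\bigcup_(X in Bset (Fpoints_of q Pi)) X)) (n - k + 1))
  (HOm : Fpdim q Om (n * t - k * t - 2))
  (HOmPi : Om \subset Pi)
  (HOmnu : Fpdim q (Om :&: nu) (n * t - k * t - 4))
  (HGa : Fpdim q Ga 2)
  (HGaPi : Ga \subset Pi)
  (HGaOm : Ga :&: Om = [set (0 : 'rV[L]_n)%R])
  (HBbGa : Bb \subset Fpoints_of q Ga)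
  (HBbmin : minimal_blocking (fun l => Fpdim q l 1 /\ l \subset Ga) Bb)
  (HBbnu : forall P, P \in Bb -> ~~ (P \subset nu)) :
  minimal_blocking (fun W => Lpdim W (k - 1)) (Bset (cone q Om Bb)).
Proof.
have [p [e [p_pr qE]]] := Hq; subst q.
have t_gt0 : (0 < t)%N by apply: leq_trans Ht.
exact: (Bset_cone_minimal_blocking (prime_power_gt1 e p_pr) (frobeniusD p_pr HL)
  (card_frobenius_fixed p_pr t_gt0 HL) Hk0 Hkn Ht HL Hnu HPi HnuPi HBPi HOm HOmPi HOmnu
  HGa HGaPi HGaOm HBbGa HBbmin).
Qed.
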